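(* Let $A=(a_{ij})$ and $B=(b_{ij})$ be two $n\times n$ generalized tournament matrices. If $A$ and $B$ have the same principal minors of orders $2$ and $3$, then the connected components of $\mathcal{E}(A,B)$ and of $\mathcal{D}(A,B)$ are clans of $A$ and of $B$.
   Context: A generalized tournament matrix of order $n$ is a real $n\times n$ matrix $M=(m_{ij})$ with nonnegative entries satisfying $M+M^{t}=J_n-I_n$. Write $[n]=\{1,\ldots,n\}$. A clan of $M$ is a subset $X\subseteq[n]$ such that for all $i,j\in X$ and $k\in[n]\setminus X$, $m_{ik}=m_{jk}$ and $m_{ki}=m_{kj}$. When $A,B$ have the same principal minors of order $2$, for $i\neq j$ one has $a_{ij}=b_{ij}$ or $a_{ij}=1-b_{ij}$. Let $P_{=}=\{\{i,j\}: a_{ij}=b_{ij},\ a_{ij}\neq 1/2\}$ and $P_{\neq}=\{\{i,j\}: a_{ij}=1-b_{ij},\ a_{ij}\neq 1/2\}$. The equality graph $\mathcal{E}(A,B)$ and the difference graph $\mathcal{D}(A,B)$ are the undirected graphs on vertex set $[n]$ with edge sets $P_{=}$ and $P_{\neq}$ respectively. *)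

From HB Require Import structures.
From mathcomp Require Import all_boot all_order all_algebra.
Set Implicit Arguments. Unset Strict Implicit. Unset Printing Implicit Defensive.
Import Order.TTheory GRing.Theory Num.Theory.
Local Open Scope ring_scope.

Definition gen_tournament (R : realFieldType) (n : nat) (M : 'M[R]_n) : Prop :=
  (forall i j, 0 <= M i j) /\ (M + M^T = const_mx 1 - 1%:M).

Definition principal_minor (R : realFieldType) (n : nat) (M : 'M[R]_n)
  (S : {set 'I_n}) : R :=
  \det (mxsub (@enum_val _ (mem S)) (@enum_val _ (mem S)) M).

Definition same_pminors (R : realFieldType) (n k : nat) (A B : 'M[R]_n) : Prop :=
  forall S : {set 'I_n}, #|S| = k -> principal_minor A S = principal_minor B S.

Definition clan (R : realFieldType) (n : nat) (M : 'M[R]_n) (X : {set 'I_n}) : Prop :=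
  forall i j k, i \in X -> j \in X -> k \notin X ->
    M i k = M j k /\ M k i = M k j.

Definition eq_graph (R : realFieldType) (n : nat) (A B : 'M[R]_n) : rel 'I_n :=
  fun i j => [&& i != j, A i j == B i j & A i j != 2^-1].

Definition diff_graph (R : realFieldType) (n : nat) (A B : 'M[R]_n) : rel 'I_n :=
  fun i j => [&& i != j, A i j == 1 - B i j & A i j != 2^-1].

Definition component (n : nat) (e : rel 'I_n) (i : 'I_n) : {set 'I_n} :=
  [set j | connect e i j].

From HB Require Import structures.
From mathcomp Require Import all_boot all_order all_algebra.
From mathcomp Require Import ring lra.
Import Order.TTheory GRing.Theory Num.Theory.
Local Open Scope ring_scope.

(* Equal 2-minors force b_ij to be a_ij or 1 - a_ij.  Let {p,q} be an edge of
   E(A,B) with a_pq = x <> 1/2 and k a vertex adjacent to neither p nor q, so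
   that b_pk = 1 - a_pk and b_qk = 1 - a_qk.  The 3-minors of A and B on
   {p,q,k} then differ by (2x - 1)(a_qk - a_pk), hence a_pk = a_qk: the column
   of a vertex outside a component is constant along its edges, hence on the
   whole component.  Finally D(A,B) = E(A,B^T), and B^T is a generalized
   tournament with the same principal minors and the same clans as B. *)

Lemma det_mx22 (R : comNzRingType) (N : 'M[R]_2) :
  \det N = N 0 0 * N 1 1 - N 0 1 * N 1 0.
Proof.
rewrite (expand_det_row _ 0) !big_ord_recl big_ord0 /cofactor !det_mx11 !mxE /=.
pose g (a b : nat) := N (inord a) (inord b).
have -> : N = \matrix_(i, j) g i j by apply/matrixP => i j; rewrite mxE /g !inord_val.
rewrite !mxE /g /bump /= !expr0 expr1; ring.
Qed.

Lemma det_mx33 (R : comNzRingType) (N : 'M[R]_3) : \det N =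
  N 0 0 * (N 1 1 * N 2 2 - N 1 2 * N 2 1) - N 0 1 * (N 1 0 * N 2 2 - N 1 2 * N 2 0)
  + N 0 2 * (N 1 0 * N 2 1 - N 1 1 * N 2 0).
Proof.
rewrite (expand_det_row _ 0) !big_ord_recl big_ord0 /cofactor.
rewrite !(expand_det_row _ 0) !big_ord_recl !big_ord0 /cofactor !det_mx11 !mxE /=.
pose g (a b : nat) := N (inord a) (inord b).
have -> : N = \matrix_(i, j) g i j by apply/matrixP => i j; rewrite mxE /g !inord_val.
rewrite !mxE /g /bump /= !expr0 !expr1 ?exprS ?expr0; ring.
Qed.

Section Tournament.

Context {R : realFieldType} {n : nat} {M : 'M[R]_n}.
Hypothesis tourM : gen_tournament M.

Lemma tournament_entry_sum i j : M i j + M j i = 1 - (i == j)%:R.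
Proof. by have := congr1 (fun N : 'M[R]_n => N i j) tourM.2; rewrite !mxE. Qed.

Lemma tournament_diag i : M i i = 0.
Proof. by have := tournament_entry_sum i i; have := tourM.1 i i; rewrite eqxx subrr; lra. Qed.

Lemma tournament_opp {i j} : i != j -> M j i = 1 - M i j.
Proof. by move=> ij; have := tournament_entry_sum i j; rewrite (negbTE ij) subr0; lra. Qed.

Lemma tournament_trmx : gen_tournament M^T.
Proof.
split=> [i j|]; first by rewrite mxE; apply: tourM.1.
by rewrite trmxK addrC; apply: tourM.2.
Qed.

Lemma tournament_clan {X : {set 'I_n}} :
  (forall x y k, x \in X -> y \in X -> k \notin X -> M x k = M y k) -> clan M X.
Proof.
move=> colX x y k xX yX kX; have Mxy := colX x y k xX yX kX; split=> //.
have neq z : z \in X -> z != k by apply: contraTneq => ->.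
by rewrite (tournament_opp (neq x xX)) (tournament_opp (neq y yX)) Mxy.
Qed.

End Tournament.

Lemma principal_minor_trmx {R : realFieldType} {n : nat} (M : 'M[R]_n) S :
  principal_minor M^T S = principal_minor M S.
Proof. by rewrite /principal_minor -trmx_mxsub det_tr. Qed.

Lemma same_pminors_trmx {R : realFieldType} {n k : nat} {A B : 'M[R]_n} :
  same_pminors k A B -> same_pminors k A B^T.
Proof. by move=> eqAB S cardS; rewrite principal_minor_trmx eqAB. Qed.

Lemma clan_trmx {R : realFieldType} {n : nat} (M : 'M[R]_n) X :
  clan M^T X <-> clan M X.
Proof.
by split=> clanX x y k xX yX kX; have [] := clanX x y k xX yX kX; rewrite ?mxE.
Qed.

Lemma diff_graph_eq_graph_trmx {R : realFieldType} {n : nat}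
    (A : 'M[R]_n) {B : 'M[R]_n} :
  gen_tournament B -> diff_graph A B =2 eq_graph A B^T.
Proof.
move=> tourB u v; rewrite /diff_graph /eq_graph mxE.
by case: eqVneq => //= /(tournament_opp tourB) ->.
Qed.

Lemma cards3 (T : finType) (u v w : T) :
  u != v -> u != w -> v != w -> #|[set u; v; w]| = 3.
Proof. by move=> uv uw vw; rewrite -setUA cardsU1 cards2 !inE negb_or uv uw vw. Qed.

Definition cyc3 {R : realFieldType} {n : nat} (M : 'M[R]_n) (p q k : 'I_n) : R :=
  M p q * M q k * M k p + M p k * M k q * M q p.

Section ZeroDiagonalMinors.

Context {R : realFieldType} {n : nat} {M : 'M[R]_n}.
Hypothesis diagM : forall i, M i i = 0.

Lemma principal_minor2 {u v} :
  u != v -> principal_minor M [set u; v] = - (M u v * M v u).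
Proof.
move=> uv; rewrite /principal_minor.
have det_sub k (f : 'I_k -> 'I_n) : k = 2%N -> injective f ->
    (forall t, f t \in [set u; v]) -> \det (mxsub f f M) = - (M u v * M v u).
  move=> Ek; subst k => f_inj fS; rewrite det_mx22 !mxE !diagM.
  have : f 0 != f 1 by rewrite (inj_eq f_inj).
  by case/set2P: (fS 0) => ->; case/set2P: (fS 1) => ->; rewrite ?eqxx // => _; ring.
by apply: det_sub; [rewrite cards2 uv | apply: enum_val_inj | apply: enum_valP].
Qed.

Lemma principal_minor3 {u v w} : u != v -> u != w -> v != w ->
  principal_minor M [set u; v; w] = cyc3 M u v w.
Proof.
move=> uv uw vw; rewrite /principal_minor /cyc3.
have det_sub k (f : 'I_k -> 'I_n) : k = 3%N -> injective f ->
    (forall t, f t \in [set u; v; w]) ->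
    \det (mxsub f f M) = M u v * M v w * M w u + M u w * M w v * M v u.
  move=> Ek; subst k => f_inj; rewrite -setUA => fS; rewrite det_mx33 !mxE !diagM.
  have : [&& f 0 != f 1, f 0 != f 2 & f 1 != f 2] by rewrite !(inj_eq f_inj).
  by case/setU1P: (fS 0) => [|/set2P[]] ->; case/setU1P: (fS 1) => [|/set2P[]] ->;
    case/setU1P: (fS 2) => [|/set2P[]] ->; rewrite ?eqxx ?andbF // => _; ring.
by apply: det_sub; [exact: cards3 | apply: enum_val_inj | apply: enum_valP].
Qed.

End ZeroDiagonalMinors.

Lemma connect_constant {T : finType} {U : Type} (e : rel T) (f : T -> U) i :
  (forall x y, connect e i x -> e x y -> f x = f y) ->
  forall x, connect e i x -> f x = f i.
Proof.
move=> f_edge x /connectP[p pth ->].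
have path_const q z : connect e i z -> path e z q -> f (last z q) = f z.
  elim: q z => [//|y q IH] z ciz /= /andP[ezy pyq].
  by rewrite IH ?(f_edge z y) //; apply: connect_trans ciz (connect1 ezy).
exact: path_const (connect0 e i) pth.
Qed.

Lemma component_boundary {T : finType} {e : rel T} {i x k : T} :
  connect e i x -> ~~ connect e i k -> (x != k) && ~~ e x k.
Proof.
move=> cix nik; apply/andP; split; first by apply: contraNneq nik => <-.
by apply: contra nik => exk; apply: connect_trans cix (connect1 exk).
Qed.

Section SamePrincipalMinors.

Context {R : realFieldType} {n : nat} {A B : 'M[R]_n}.
Hypotheses (tourA : gen_tournament A) (tourB : gen_tournament B).
Hypotheses (eq2 : same_pminors 2 A B) (eq3 : same_pminors 3 A B).

Lemma same_pminors2_entry {u v} : u != v -> B u v = A u v \/ B u v = 1 - A u v.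
Proof.
move=> uv; have := eq2 [set u; v]; rewrite cards2 uv => /(_ erefl).
rewrite (principal_minor2 (tournament_diag tourA) uv).
rewrite (principal_minor2 (tournament_diag tourB) uv).
rewrite (tournament_opp tourA uv) (tournament_opp tourB uv) => /oppr_inj eqAB.
have /eqP : (B u v - A u v) * (1 - A u v - B u v) = 0.
  by rewrite -[RHS](subrr (A u v * (1 - A u v))) {1}eqAB; ring.
by rewrite mulf_eq0 !subr_eq0 => /orP[/eqP-> | /eqP h]; [left | right; lra].
Qed.

Lemma non_edge_eq_graph {u v} : u != v -> ~~ eq_graph A B u v -> B u v = 1 - A u v.
Proof.
move=> uv; rewrite /eq_graph uv /=.
by case: (same_pminors2_entry uv) => -> //; rewrite eqxx negbK => /eqP ->; lra.
Qed.

Lemma cyc3_same u v w : u != v -> u != w -> v != w -> cyc3 A u v w = cyc3 B u v w.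
Proof.
move=> uv uw vw; rewrite -(principal_minor3 (tournament_diag tourA)) //.
by rewrite -(principal_minor3 (tournament_diag tourB)) // eq3 // cards3.
Qed.

Lemma eq_graph_edge_col p q k :
  eq_graph A B p q -> ~~ eq_graph A B p k -> ~~ eq_graph A B q k ->
  k != p -> k != q -> A p k = A q k.
Proof.
move=> /and3P[pq /eqP Apq half_pq] npk nqk kp kq.
have pk : p != k by rewrite eq_sym.
have qk : q != k by rewrite eq_sym.
have gap : cyc3 A p q k - cyc3 B p q k = (2 * A p q - 1) * (A q k - A p k).
  rewrite /cyc3 (tournament_opp tourA pq) (tournament_opp tourA pk).
  rewrite (tournament_opp tourA qk) (tournament_opp tourB pq) (tournament_opp tourB pk).
  rewrite (tournament_opp tourB qk) (non_edge_eq_graph pk npk).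
  by rewrite (non_edge_eq_graph qk nqk) -Apq; ring.
move/eqP: gap; rewrite cyc3_same // subrr eq_sym mulf_eq0 !subr_eq0.
case/orP=> [/eqP half | /eqP -> //].
by case/negP: half_pq; apply/eqP; lra.
Qed.

Lemma eq_graph_component_clan i :
  clan A (component (eq_graph A B) i) /\ clan B (component (eq_graph A B) i).
Proof.
set C := component _ i.
have colA x y k : x \in C -> y \in C -> k \notin C -> A x k = A y k.
  rewrite !inE => cix ciy nik.
  suff col_i : forall z, connect (eq_graph A B) i z -> A z k = A i k.
    by rewrite !col_i.
  apply: (connect_constant _ (fun z => A z k)) => z z' ciz ezz'.
  have ciz' := connect_trans ciz (connect1 ezz').
  have /andP[zk nzk] := component_boundary ciz nik.
  have /andP[z'k nz'k] := component_boundary ciz' nik.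
  by apply: eq_graph_edge_col; rewrite // eq_sym.
split; first exact: (tournament_clan tourA colA).
apply: (tournament_clan tourB) => x y k xC yC kC.
move: (xC) (yC) (kC); rewrite !inE => cix ciy nik.
have /andP[xk nxk] := component_boundary cix nik.
have /andP[yk nyk] := component_boundary ciy nik.
by rewrite (non_edge_eq_graph xk nxk) (non_edge_eq_graph yk nyk) (colA x y k xC yC kC).
Qed.

End SamePrincipalMinors.

Theorem proposition4p3 (R : realFieldType) (n : nat) (A B : 'M[R]_n) :
  gen_tournament A -> gen_tournament B ->
  same_pminors 2 A B -> same_pminors 3 A B ->
  forall i : 'I_n,
    (clan A (component (eq_graph A B) i) /\ clan B (component (eq_graph A B) i)) /\
    (clan A (component (diff_graph A B) i) /\ clan B (component (diff_graph A B) i)).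
Proof.
move=> tourA tourB eq2 eq3 i; split; first exact: eq_graph_component_clan.
have -> : component (diff_graph A B) i = component (eq_graph A B^T) i.
  by apply/setP => j; rewrite !inE (eq_connect (diff_graph_eq_graph_trmx A tourB)).
have [clanA clanBt] := eq_graph_component_clan tourA (tournament_trmx tourB)
  (same_pminors_trmx eq2) (same_pminors_trmx eq3) i.
by split=> //; apply/clan_trmx.
Qed.
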